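(* Let $x,y\in\mathbb{B}^2\setminus\{0\}$ be such that $0,x,y$ are noncollinear and $|x|\ne|y|$. Let $S^1(a,r_a)$ be the circle through $x,y,x^*,y^*$ (it is orthogonal to $S^1$), let $\{x_*,y_*\}=S^1\cap S^1(a,r_a)$ labelled so that $x_*,x,y,y_*$ occur in this order on the arc of $S^1(a,r_a)$ inside $\overline{\mathbb{B}^2}$, and let $\sigma$ be the arc of $S^1(a,r_a)$ with endpoints $x^*,y^*$ containing $x,y$. Let $S^1(c,r_c)$ be the circle through $0,x,y$, let $z$ be the point of $L(0,c)\cap S^1(a,r_a)$ in $\mathbb{B}^2$ and $z'$ the point of $L(0,c)\cap S^1(a,r_a)$ in $\mathbb{R}^2\setminus\mathbb{B}^2$. Let $b=L(x_*,y)\cap L(x,y^* )$, $d=L(x^*,y)\cap L(x_*,y^* )$, $b'=L(x,y_* )\cap L(x^*,y)$, $d'=L(x,y^* )\cap L(x^*,y_* )$. Then: (1) if $\sigma$ is a semicircle, then $z$ is the hyperbolic midpoint of the hyperbolic segment $J[x,y]$, the circle $S^1(c,r_c)$ is orthogonal to $S^1(a,r_a)$, and $|z,x,x^*,z'|=|z,y,y^*,z'|$; (2) the points $0,b,d$ are collinear, and the points $0,b',d'$ are collinear.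
   Context: $\mathbb{B}^2$ is the unit disk, $S^1$ the unit circle, $S^1(c,r)$ the circle with centre $c$ and radius $r$, $L(p,q)$ the line through $p,q$; $x^*=x/|x|^2$. For distinct points $p,q,r,s\in\mathbb{R}^2$ the absolute ratio is $|p,q,r,s|=\frac{|p-r||q-s|}{|p-q||r-s|}$. The hyperbolic distance on $\mathbb{B}^2$ satisfies $\sinh\frac{\rho(x,y)}{2}=\frac{|x-y|}{\sqrt{1-|x|^2}\sqrt{1-|y|^2}}$; $J[x,y]$ is the arc of $S^1(a,r_a)$ between $x$ and $y$, and its hyperbolic midpoint is the $z\in J[x,y]$ with $\rho(x,z)=\rho(z,y)$. *)

From Stdlib Require Import Reals Lra.
Open Scope R_scope.

Definition pt := (R * R)%type.

Definition padd (p q : pt) : pt := (fst p + fst q, snd p + snd q).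
Definition psub (p q : pt) : pt := (fst p - fst q, snd p - snd q).
Definition pscale (t : R) (p : pt) : pt := (t * fst p, t * snd p).
Definition dot (p q : pt) : R := fst p * fst q + snd p * snd q.
Definition norm (p : pt) : R := sqrt (dot p p).
Definition dist (p q : pt) : R := norm (psub p q).
Definition origin : pt := (0, 0).

Definition inv_pt (x : pt) : pt := pscale (/ (dot x x)) x.

Definition on_circle (c : pt) (r : R) (p : pt) : Prop := dist p c = r.

Definition on_line (u v p : pt) : Prop := exists t : R, p = padd u (pscale t (psub v u)).

Definition collinear (p q s : pt) : Prop :=
  (fst q - fst p) * (snd s - snd p) - (snd q - snd p) * (fst s - fst p) = 0.

Definition circ_pt (a : pt) (r t : R) : pt := padd a (pscale r (cos t, sin t)).

Definition arc_order4_in_closed_disk (a : pt) (r : R) (p1 p2 p3 p4 : pt) : Prop :=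
  exists t1 t2 t3 t4 : R,
    ((t1 < t2 /\ t2 < t3 /\ t3 < t4) \/ (t4 < t3 /\ t3 < t2 /\ t2 < t1)) /\
    Rabs (t4 - t1) < 2 * PI /\
    p1 = circ_pt a r t1 /\ p2 = circ_pt a r t2 /\
    p3 = circ_pt a r t3 /\ p4 = circ_pt a r t4 /\
    (forall t, Rmin t1 t4 <= t <= Rmax t1 t4 -> norm (circ_pt a r t) <= 1).

Definition on_J (a : pt) (r : R) (x y w : pt) : Prop :=
  exists t1 t2 t3 : R,
    ((t1 <= t2 /\ t2 <= t3) \/ (t3 <= t2 /\ t2 <= t1)) /\
    Rabs (t3 - t1) < 2 * PI /\
    x = circ_pt a r t1 /\ w = circ_pt a r t2 /\ y = circ_pt a r t3 /\
    (forall t, Rmin t1 t3 <= t <= Rmax t1 t3 -> norm (circ_pt a r t) < 1).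

Definition rho (x y : pt) : R :=
  2 * arcsinh (dist x y / (sqrt (1 - norm x ^ 2) * sqrt (1 - norm y ^ 2))).

Definition hyp_midpoint_J (a : pt) (r : R) (x y z : pt) : Prop :=
  on_J a r x y z /\ rho x z = rho z y.

(* the arc of S^1(a, r) with endpoints p, q is a semicircle:
   p, q lie on the circle and are diametrically opposite *)
Definition semicircle_endpoints (a : pt) (r : R) (p q : pt) : Prop :=
  on_circle a r p /\ on_circle a r q /\ a = pscale (/ 2) (padd p q).

(* the circles S^1(a, ra) and S^1(c, rc) are orthogonal: they meet at a point
   where the radii (equivalently the tangents) are perpendicular *)
Definition orthogonal_circles (a : pt) (ra : R) (c : pt) (rc : R) : Prop :=
  exists p, on_circle a ra p /\ on_circle c rc p /\ dot (psub p a) (psub p c) = 0.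

Definition abs_ratio (p q r s : pt) : R :=
  dist p r * dist q s / (dist p q * dist r s).

(* Since x and x^* lie on it, S^1(a, r_a) is orthogonal to S^1, i.e. |a|^2 = 1 + r_a^2,
   and its points satisfy |p|^2 = lam(p) with the affine lam(p) = 2 a.p - 1.  Hence on
   this circle inversion agrees with the projective map q |-> q / lam(q), which fixes
   every line through 0.  It sends L(x_*, y) and L(x, y^* ) to L(x_*, y^* ) and L(x^*, y),
   hence b to d, so 0, b, d are collinear; likewise for b', d'.

   If sigma is a semicircle, a = (x^* + y^* )/2 gives a.c = 1/2.  For w on S^1(a, r_a),
   |x - w|^2 (1 - |y|^2) - |y - w|^2 (1 - |x|^2) is linear in w and vanishes on L(0, c),
   so L(0, c) meets the circle in the hyperbolic bisector of x and y; by the intermediate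
   value theorem it crosses J[x, y], and that crossing is z.  The intersections z, z' are
   the roots of one quadratic with product 1/|c|^2, so z' = z^*, and both absolute
   ratios reduce to the same bisector identity. *)

From Pilot Require Import Defs.
From Stdlib Require Import Reals Lra Psatz.
Open Scope R_scope.

Definition cross (p q : pt) : R := fst p * snd q - snd p * fst q.

Definition dist2 (p q : pt) : R := dot (psub p q) (psub p q).

Lemma dot_scale_l (t : R) (p q : pt) : dot (pscale t p) q = t * dot p q.
Proof. unfold dot, pscale; simpl; ring. Qed.

Lemma dot_scale_r (t : R) (p q : pt) : dot p (pscale t q) = t * dot p q.
Proof. unfold dot, pscale; simpl; ring. Qed.

Lemma dot_ge0 (p : pt) : 0 <= dot p p.
Proof. unfold dot; nra. Qed.

Lemma dot_gt0 (p : pt) : p <> origin -> 0 < dot p p.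
Proof.
  destruct p as [p1 p2]; unfold dot, origin; simpl; intro Hp.
  destruct (Req_dec p1 0), (Req_dec p2 0); try nra.
  subst; contradiction.
Qed.

Lemma norm_sqr (p : pt) : norm p ^ 2 = dot p p.
Proof. unfold norm; rewrite pow2_sqrt; [ring | apply dot_ge0]. Qed.

Lemma dist_sqr (p q : pt) : Defs.dist p q ^ 2 = dist2 p q.
Proof. apply norm_sqr. Qed.

Lemma dist2_sym (p q : pt) : dist2 p q = dist2 q p.
Proof. unfold dist2, dot, psub; simpl; ring. Qed.

Lemma dist2_diag (p : pt) : dist2 p p = 0.
Proof. unfold dist2, dot, psub; simpl; ring. Qed.

Lemma dist2_gt0 (p q : pt) : p <> q -> 0 < dist2 p q.
Proof.
  intro Hpq; apply dot_gt0; intro E; apply Hpq.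
  destruct p, q; unfold psub, origin in E; simpl in E; injection E as E1 E2.
  f_equal; lra.
Qed.

Lemma norm_lt1 (p : pt) : norm p < 1 -> dot p p < 1.
Proof. intro H; rewrite <- norm_sqr; pose proof (sqrt_pos (dot p p)); unfold norm in *; nra. Qed.

Lemma norm_ge1 (p : pt) : 1 <= norm p -> 1 <= dot p p.
Proof. intro H; rewrite <- norm_sqr; nra. Qed.

Lemma norm_eq1 (p : pt) : norm p = 1 -> dot p p = 1.
Proof. intro H; rewrite <- norm_sqr, H; ring. Qed.

Lemma inv_pt_dot (p : pt) : p <> origin -> dot (inv_pt p) (inv_pt p) = / dot p p.
Proof.
  intro Hp; pose proof (dot_gt0 p Hp).
  unfold inv_pt; rewrite dot_scale_l, dot_scale_r; field; lra.
Qed.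

Lemma inv_pt_involutive (p : pt) : p <> origin -> inv_pt (inv_pt p) = p.
Proof.
  intro Hp; pose proof (dot_gt0 p Hp).
  unfold inv_pt at 1; rewrite inv_pt_dot by exact Hp.
  destruct p as [p1 p2]; unfold inv_pt, pscale, dot in *; simpl in *.
  f_equal; field; lra.
Qed.

Lemma inv_pt_unit (p : pt) : dot p p = 1 -> inv_pt p = p.
Proof.
  intro H; unfold inv_pt; rewrite H, Rinv_1.
  destruct p; unfold pscale; simpl; f_equal; ring.
Qed.

Lemma pscale_dot_inv_pt (p : pt) : p <> origin -> p = pscale (dot p p) (inv_pt p).
Proof.
  intro Hp; pose proof (dot_gt0 p Hp).
  destruct p as [p1 p2]; unfold inv_pt, pscale in *; simpl.
  f_equal; field; lra.
Qed.

Lemma inv_pt_scale (t : R) (c : pt) : t <> 0 -> c <> origin ->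
  inv_pt (pscale t c) = pscale (/ (t * dot c c)) c.
Proof.
  intros Ht Hc; pose proof (dot_gt0 c Hc).
  unfold inv_pt; rewrite dot_scale_l, dot_scale_r.
  destruct c as [c1 c2]; unfold pscale, dot in *; simpl in *.
  f_equal; field; split; lra.
Qed.

Lemma on_line_origin (c p : pt) : on_line origin c p -> exists t, p = pscale t c.
Proof.
  intros [t ->]; exists t.
  destruct c; unfold padd, pscale, psub, origin; simpl; f_equal; ring.
Qed.

Lemma affine_on_line (u : pt) (k s : R) (p q : pt) :
  dot u (padd p (pscale s (psub q p))) + k = (1 - s) * (dot u p + k) + s * (dot u q + k).
Proof. unfold dot, padd, pscale, psub; simpl; ring. Qed.

(* The central map [P' |-> (u.P + k) P'] with affine factor is projective: the point of
   the line [P1' P2'] on the line [0 b] is [b / (u.b + k)]. *)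
Lemma dilation_on_line (u : pt) (k : R) (P1 P2 P1' P2' b d : pt) :
  P1 = pscale (dot u P1 + k) P1' -> P2 = pscale (dot u P2 + k) P2' ->
  on_line P1 P2 b -> on_line P1' P2' d ->
  exists m, psub b (pscale (dot u b + k) d) = pscale m (psub P2' P1').
Proof.
  intros E1 E2 [s Hb] [al Hd].
  rewrite Hb, affine_on_line.
  set (l1 := dot u P1 + k) in *; set (l2 := dot u P2 + k) in *; clearbody l1 l2.
  exists (s * l2 - ((1 - s) * l1 + s * l2) * al).
  rewrite Hd, E1, E2.
  unfold padd, pscale, psub; simpl; f_equal; ring.
Qed.

Lemma pscale_eq_nonparallel (m m' : R) (v w : pt) :
  pscale m v = pscale m' w -> cross v w <> 0 -> m = 0.
Proof.
  destruct v as [v1 v2], w as [w1 w2]; unfold pscale, cross; simpl.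
  intros E Hc; injection E as E1 E2.
  assert (H : m * (v1 * w2 - v2 * w1) = 0).
  { transitivity (m * v1 * w2 - m * v2 * w1); [ring|].
    rewrite E1, E2; ring. }
  apply Rmult_integral in H; destruct H; [assumption | contradiction].
Qed.

Lemma dilation_collinear (u : pt) (k : R) (P1 P2 Q1 Q2 P1' P2' Q1' Q2' b d : pt) :
  P1 = pscale (dot u P1 + k) P1' -> P2 = pscale (dot u P2 + k) P2' ->
  Q1 = pscale (dot u Q1 + k) Q1' -> Q2 = pscale (dot u Q2 + k) Q2' ->
  on_line P1 P2 b -> on_line Q1 Q2 b -> on_line P1' P2' d -> on_line Q1' Q2' d ->
  cross (psub P2' P1') (psub Q2' Q1') <> 0 -> collinear origin b d.
Proof.
  intros E1 E2 E3 E4 Hb1 Hb2 Hd1 Hd2 Hnp.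
  destruct (dilation_on_line u k P1 P2 P1' P2' b d E1 E2 Hb1 Hd1) as [m Hm].
  destruct (dilation_on_line u k Q1 Q2 Q1' Q2' b d E3 E4 Hb2 Hd2) as [m' Hm'].
  assert (Hm0 : m = 0)
    by (apply (pscale_eq_nonparallel m m' (psub P2' P1') (psub Q2' Q1')); [congruence | exact Hnp]).
  rewrite Hm0 in Hm.
  set (mu := dot u b + k) in Hm; clearbody mu.
  destruct b as [b1 b2], d as [d1 d2]; unfold psub, pscale, collinear, origin in *; simpl in *.
  injection Hm as Hm1 Hm2.
  assert (b1 = mu * d1) by lra; assert (b2 = mu * d2) by lra.
  subst; ring.
Qed.

Lemma lines_nonparallel (P1 P2 Q1 Q2 d : pt) :
  ~ collinear P1 P2 Q1 -> on_line P1 P2 d -> on_line Q1 Q2 d ->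
  cross (psub P2 P1) (psub Q2 Q1) <> 0.
Proof.
  intros Hnc [al Hd1] [be Hd2] Hc; apply Hnc.
  rewrite Hd1 in Hd2.
  destruct P1 as [p1 p2], P2 as [q1 q2], Q1 as [m1 m2], Q2 as [n1 n2].
  unfold collinear, cross, psub, padd, pscale in *; simpl in *.
  injection Hd2 as Ha Hb.
  replace (m1 - p1) with (al * (q1 - p1) - be * (n1 - m1)) by lra.
  replace (m2 - p2) with (al * (q2 - p2) - be * (n2 - m2)) by lra.
  transitivity (- be * ((q1 - p1) * (n2 - m2) - (q2 - p2) * (n1 - m1))); [ring|].
  rewrite Hc; ring.
Qed.

(* A line meets a circle at most twice: the power of [p + s (q - p)] is a quadratic in [s]
   vanishing at [s = 0] and [s = 1]. *)
Lemma concyclic_not_collinear (a p q w : pt) (r : R) :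
  on_circle a r p -> on_circle a r q -> on_circle a r w ->
  p <> q -> p <> w -> q <> w -> ~ collinear p q w.
Proof.
  unfold on_circle; intros Cp Cq Cw Hpq Hpw Hqw Hc.
  pose proof (dist_sqr p a) as Ep; pose proof (dist_sqr q a) as Eq; pose proof (dist_sqr w a) as Ew.
  rewrite Cp in Ep; rewrite Cq in Eq; rewrite Cw in Ew.
  destruct a as [a1 a2], p as [p1 p2], q as [q1 q2], w as [w1 w2].
  unfold collinear, dist2, dot, psub in *; simpl in *.
  set (u1 := q1 - p1) in *; set (u2 := q2 - p2) in *.
  set (v1 := w1 - p1) in *; set (v2 := w2 - p2) in *.
  assert (Hu : u1 * u1 + u2 * u2 <> 0).
  { intro H; assert (u1 = 0) by nra; assert (u2 = 0) by nra.
    apply Hpq; unfold u1, u2 in *; f_equal; lra. }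
  assert (Eu : 2 * ((p1 - a1) * u1 + (p2 - a2) * u2) + (u1 * u1 + u2 * u2) = 0)
    by (unfold u1, u2; nra).
  assert (Ev : 2 * ((p1 - a1) * v1 + (p2 - a2) * v2) + (v1 * v1 + v2 * v2) = 0)
    by (unfold v1, v2; nra).
  set (t := (u1 * v1 + u2 * v2) / (u1 * u1 + u2 * u2)).
  assert (H1 : u2 * (u1 * v2 - u2 * v1) = 0) by (rewrite Hc; ring).
  assert (H2 : u1 * (u1 * v2 - u2 * v1) = 0) by (rewrite Hc; ring).
  assert (Hv1 : v1 = t * u1) by (unfold t; field_simplify_eq; [lra | exact Hu]).
  assert (Hv2 : v2 = t * u2) by (unfold t; field_simplify_eq; [lra | exact Hu]).
  clearbody t; rewrite Hv1, Hv2 in Ev.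
  assert (Ht : t * (t - 1) * (u1 * u1 + u2 * u2) = 0).
  { transitivity (2 * ((p1 - a1) * (t * u1) + (p2 - a2) * (t * u2))
                  + (t * u1 * (t * u1) + t * u2 * (t * u2))
                  - t * (2 * ((p1 - a1) * u1 + (p2 - a2) * u2) + (u1 * u1 + u2 * u2))); [ring|].
    rewrite Ev, Eu; ring. }
  apply Rmult_integral in Ht; destruct Ht as [Ht | Ht]; [| contradiction].
  apply Rmult_integral in Ht; destruct Ht as [Ht | Ht].
  - subst t; apply Hpw; unfold v1, v2, u1, u2 in *; f_equal; lra.
  - apply Hqw; unfold v1, v2, u1, u2 in *; f_equal; nra.
Qed.

Lemma on_circle_dist2 (a p : pt) (r : R) : 0 <= r ->
  on_circle a r p <-> dot p p - 2 * dot a p + dot a a = r * r.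
Proof.
  intro Hr; unfold on_circle.
  replace (dot p p - 2 * dot a p + dot a a) with (dist2 p a)
    by (unfold dist2, dot, psub; simpl; ring).
  split; intro H.
  - rewrite <- dist_sqr, H; ring.
  - unfold Defs.dist, norm; fold (dist2 p a); rewrite H; apply sqrt_square, Hr.
Qed.

Lemma circle_through_origin_dot (c p : pt) (rc : R) : 0 <= rc ->
  on_circle c rc origin -> on_circle c rc p -> dot c p = dot p p / 2.
Proof.
  intros Hrc C0 Cp; apply on_circle_dist2 in C0, Cp; try exact Hrc.
  unfold dot, origin in *; simpl in *; lra.
Qed.

Lemma trig_shift (A B ra t0 e : R) : ra + A * cos t0 + B * sin t0 = 0 ->
  ra + A * cos (t0 + e) + B * sin (t0 + e)
  = ra * (1 - cos e) + (B * cos t0 - A * sin t0) * sin e.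
Proof.
  intro H; rewrite cos_plus, sin_plus.
  transitivity (ra * (1 - cos e) + (B * cos t0 - A * sin t0) * sin e
                + cos e * (ra + A * cos t0 + B * sin t0)); [ring|].
  rewrite H; ring.
Qed.

(* A maximum [0] in the interior would be a double zero, i.e. the line
   [ra + A X + B Y = 0] would be tangent to the unit circle; it is at distance
   [ra / sqrt (1 + ra^2) < 1] from the origin. *)
Lemma trig_nonpos_interior_neg (A B ra lo hi t0 : R) :
  0 < ra -> A ^ 2 + B ^ 2 = 1 + ra ^ 2 ->
  (forall t, lo <= t <= hi -> ra + A * cos t + B * sin t <= 0) ->
  lo < t0 < hi -> ra + A * cos t0 + B * sin t0 < 0.
Proof.
  intros Hra Hab Hle Ht0.
  destruct (Rlt_or_le (ra + A * cos t0 + B * sin t0) 0) as [|Hge]; [assumption | exfalso].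
  assert (H0 : ra + A * cos t0 + B * sin t0 = 0) by (specialize (Hle t0 ltac:(lra)); lra).
  set (D := B * cos t0 - A * sin t0).
  assert (sin_pos : forall h, 0 < h <= 1 -> 0 < sin h)
    by (intros h Hh; apply sin_gt_0; pose proof PI2_1; lra).
  destruct (Rtotal_order D 0) as [HD | [HD | HD]].
  - set (h := Rmin (t0 - lo) 1).
    assert (Hh : 0 < h <= 1) by (split; [apply Rmin_pos; lra | apply Rmin_r]).
    assert (Hhlo : h <= t0 - lo) by apply Rmin_l.
    pose proof (trig_shift A B ra t0 (- h) H0) as E; fold D in E.
    rewrite cos_neg, sin_neg in E.
    pose proof (sin_pos h Hh); pose proof (COS_bound h).
    specialize (Hle (t0 + - h) ltac:(lra)); nra.
  - pose proof (sin2_cos2 t0) as Hsc; unfold Rsqr in Hsc; unfold D in HD.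
    assert (E : (A * cos t0 + B * sin t0) ^ 2 + (B * cos t0 - A * sin t0) ^ 2
                = (A ^ 2 + B ^ 2) * (sin t0 * sin t0 + cos t0 * cos t0)) by ring.
    rewrite Hsc, HD in E.
    replace (A * cos t0 + B * sin t0) with (- ra) in E by lra; nra.
  - set (h := Rmin (hi - t0) 1).
    assert (Hh : 0 < h <= 1) by (split; [apply Rmin_pos; lra | apply Rmin_r]).
    assert (Hhhi : h <= hi - t0) by apply Rmin_l.
    pose proof (trig_shift A B ra t0 h H0) as E; fold D in E.
    pose proof (sin_pos h Hh); pose proof (COS_bound h).
    specialize (Hle (t0 + h) ltac:(lra)); nra.
Qed.

Lemma sqr_inj (u v : R) : 0 <= u -> 0 <= v -> u ^ 2 = v ^ 2 -> u = v.
Proof. intros; nra. Qed.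

Lemma rho_eq_of_dist2 (x y z : pt) : dot x x < 1 -> dot y y < 1 -> dot z z < 1 ->
  dist2 x z * (1 - dot y y) = dist2 y z * (1 - dot x x) -> rho x z = rho z y.
Proof.
  intros Hx Hy Hz E; unfold rho; do 2 f_equal.
  rewrite !norm_sqr.
  pose proof (dot_ge0 x); pose proof (dot_ge0 y); pose proof (dot_ge0 z).
  assert (Sx : 0 < sqrt (1 - dot x x)) by (apply sqrt_lt_R0; lra).
  assert (Sy : 0 < sqrt (1 - dot y y)) by (apply sqrt_lt_R0; lra).
  assert (Sz : 0 < sqrt (1 - dot z z)) by (apply sqrt_lt_R0; lra).
  pose proof (sqrt_pos (dist2 x z)); pose proof (sqrt_pos (dist2 z y)).
  apply sqr_inj.
  - apply Rle_mult_inv_pos; [apply sqrt_pos | nra].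
  - apply Rle_mult_inv_pos; [apply sqrt_pos | nra].
  - unfold Rdiv; rewrite !Rpow_mult_distr, !pow_inv, !Rpow_mult_distr, !dist_sqr, !pow2_sqrt by lra.
    rewrite (dist2_sym z y).
    field_simplify_eq; [lra | repeat split; lra].
Qed.

(* [|w, p, p*, w*|] in terms of [|p - w|]: the numerator [|w - p*| |p - w*|] equals
   [(|p - w|^2 + (1 - |p|^2)(1 - |w|^2)) / (|p| |w|)]. *)
Lemma abs_ratio_inv_pt (p w : pt) : p <> origin -> w <> origin -> p <> w ->
  abs_ratio w p (inv_pt p) (inv_pt w) = 1 + (1 - dot p p) * (1 - dot w w) / dist2 p w.
Proof.
  intros Hp Hw Hpw.
  pose proof (dot_gt0 p Hp) as Qp; pose proof (dot_gt0 w Hw) as Qw.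
  pose proof (dist2_gt0 p w Hpw) as D.
  set (Q := dot p p * dot w w - 2 * dot p w + 1).
  assert (E1 : dist2 w (inv_pt p) = Q / dot p p).
  { destruct p as [p1 p2], w as [w1 w2].
    unfold Q, dist2, inv_pt, psub, pscale, dot in *; simpl in *; field; lra. }
  assert (E2 : dist2 p (inv_pt w) = Q / dot w w).
  { destruct p as [p1 p2], w as [w1 w2].
    unfold Q, dist2, inv_pt, psub, pscale, dot in *; simpl in *; field; lra. }
  assert (E3 : dist2 (inv_pt p) (inv_pt w) = dist2 p w / (dot p p * dot w w)).
  { destruct p as [p1 p2], w as [w1 w2].
    unfold dist2, inv_pt, psub, pscale, dot in *; simpl in *; field; lra. }
  assert (EQ : Q = dist2 p w + (1 - dot p p) * (1 - dot w w))
    by (unfold Q, dist2, psub, dot; simpl; ring).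
  assert (HQ : 0 <= Q).
  { replace Q with (dot p p * dist2 w (inv_pt p)) by (rewrite E1; field; lra).
    pose proof (dot_ge0 (psub w (inv_pt p))); unfold dist2; nra. }
  replace (1 + (1 - dot p p) * (1 - dot w w) / dist2 p w) with (Q / dist2 p w)
    by (rewrite EQ; field; lra).
  unfold abs_ratio.
  assert (0 < Defs.dist w p) by (apply sqrt_lt_R0; rewrite dist2_sym in D; exact D).
  assert (0 < Defs.dist (inv_pt p) (inv_pt w)).
  { apply sqrt_lt_R0; fold (dist2 (inv_pt p) (inv_pt w)); rewrite E3.
    apply Rdiv_lt_0_compat; nra. }
  apply sqr_inj.
  - apply Rle_mult_inv_pos; [apply Rmult_le_pos; apply sqrt_pos | nra].
  - apply Rle_mult_inv_pos; lra.
  - unfold Rdiv; rewrite !Rpow_mult_distr, !pow_inv, !Rpow_mult_distr, !dist_sqr.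
    rewrite E1, E2, E3, (dist2_sym w p).
    field; repeat split; lra.
Qed.

Lemma quadratic_roots_product (C s t : R) :
  s * s * C - s + 1 = 0 -> t * t * C - t + 1 = 0 -> s <> t -> s * t * C = 1.
Proof.
  intros Hs Ht Hst.
  assert (E : (s - t) * (C * (s + t) - 1) = 0) by nra.
  apply Rmult_integral in E; destruct E as [E | E]; [lra | nra].
Qed.

Lemma common_normal_parallel (n w c : pt) :
  dot n w = 0 -> dot n c = 0 -> n <> origin -> c <> origin -> exists s, w = pscale s c.
Proof.
  intros Hw Hc Hn Hc0; pose proof (dot_gt0 c Hc0) as Qc.
  exists (dot w c / dot c c).
  assert (Hcr : fst w * snd c - snd w * fst c = 0).
  { destruct n as [n1 n2], w as [w1 w2], c as [c1 c2].
    unfold dot, origin in *; simpl in *.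
    assert (E1 : n1 * (w1 * c2 - w2 * c1) = 0).
    { transitivity (c2 * (n1 * w1 + n2 * w2) - w2 * (n1 * c1 + n2 * c2)); [ring|].
      rewrite Hw, Hc; ring. }
    assert (E2 : n2 * (w1 * c2 - w2 * c1) = 0).
    { transitivity (w1 * (n1 * c1 + n2 * c2) - c1 * (n1 * w1 + n2 * w2)); [ring|].
      rewrite Hw, Hc; ring. }
    destruct (Req_dec n1 0) as [-> | H1]; [destruct (Req_dec n2 0) as [-> | H2] |].
    - contradiction.
    - apply (Rmult_eq_reg_l n2); [rewrite E2; ring | exact H2].
    - apply (Rmult_eq_reg_l n1); [rewrite E1; ring | exact H1]. }
  destruct w as [w1 w2], c as [c1 c2]; unfold pscale, dot in *; simpl in *.
  assert (c1 * (w1 * c2 - w2 * c1) = 0) by (rewrite Hcr; ring).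
  assert (c2 * (w1 * c2 - w2 * c1) = 0) by (rewrite Hcr; ring).
  f_equal; field_simplify_eq; lra.
Qed.

Definition bisector_normal (x y a : pt) : pt :=
  psub (pscale (1 - dot y y) (psub a x)) (pscale (1 - dot x x) (psub a y)).

Lemma bisector_normal_dot (x y a c : pt) :
  dot a c = / 2 -> dot c x = dot x x / 2 -> dot c y = dot y y / 2 ->
  dot (bisector_normal x y a) c = 0.
Proof.
  intros Hac Hcx Hcy.
  transitivity ((dot a c - dot c x) * (1 - dot y y) - (dot a c - dot c y) * (1 - dot x x)).
  - unfold bisector_normal, dot, psub, pscale; simpl; ring.
  - rewrite Hac, Hcx, Hcy; field.
Qed.

Lemma semicircle_center_dot (x y a c : pt) : x <> origin -> y <> origin ->
  a = pscale (/ 2) (padd (inv_pt x) (inv_pt y)) ->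
  dot c x = dot x x / 2 -> dot c y = dot y y / 2 -> dot a c = / 2.
Proof.
  intros Hx Hy -> Hcx Hcy; pose proof (dot_gt0 x Hx); pose proof (dot_gt0 y Hy).
  transitivity (/ 2 * (dot c x / dot x x + dot c y / dot y y)).
  - unfold inv_pt, padd, pscale, dot in *; simpl; field; lra.
  - rewrite Hcx, Hcy; field; lra.
Qed.

Lemma on_J_in_disk (a : pt) (ra : R) (x y w : pt) : on_J a ra x y w -> dot w w < 1.
Proof.
  intros [t1 [t2 [t3 [Hord [_ [_ [-> [_ Hin]]]]]]]].
  apply norm_lt1, Hin; unfold Rmin, Rmax; destruct (Rle_dec t1 t3); lra.
Qed.

Lemma neq_of_dot (p q : pt) : dot p p <> dot q q -> p <> q.
Proof. intros H ->; apply H; reflexivity. Qed.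

Section OrthogonalCircle.

Variables (a : pt) (ra : R).
Hypothesis ra_gt0 : 0 < ra.

Lemma circle_orthogonal_unit (x : pt) : x <> origin -> dot x x <> 1 ->
  on_circle a ra x -> on_circle a ra (inv_pt x) -> dot a a = 1 + ra * ra.
Proof.
  intros Hx0 Hx1 Cx Cxi.
  apply on_circle_dist2 in Cx, Cxi; try lra.
  pose proof (dot_gt0 x Hx0).
  rewrite inv_pt_dot in Cxi by exact Hx0.
  unfold inv_pt in Cxi; rewrite dot_scale_r in Cxi.
  set (q := dot x x) in *; set (P := dot a a - ra * ra).
  assert (E : 1 - 2 * dot a x + P * q = 0).
  { transitivity (q * (/ q - 2 * (/ q * dot a x) + dot a a - ra * ra)); [unfold P; field; lra|].
    rewrite Cxi; ring. }
  assert (H0 : (1 - q) * (1 - P) = 0) by (unfold P in *; nra).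
  apply Rmult_integral in H0; destruct H0; [lra | unfold P in *; lra].
Qed.

Hypothesis a_orth : dot a a = 1 + ra * ra.

Lemma on_circle_power (p : pt) : on_circle a ra p <-> dot p p = 2 * dot a p - 1.
Proof. rewrite on_circle_dist2 by lra; lra. Qed.

Lemma on_circle_neq_origin (p : pt) : on_circle a ra p -> p <> origin.
Proof.
  intros C ->; apply on_circle_power in C.
  unfold dot, origin in C; simpl in C; lra.
Qed.

Lemma on_circle_inv_pt (p : pt) : on_circle a ra p -> on_circle a ra (inv_pt p).
Proof.
  intro C; pose proof (on_circle_neq_origin p C) as Hp; pose proof (dot_gt0 p Hp).
  apply on_circle_power in C; apply on_circle_power.
  rewrite inv_pt_dot by exact Hp; unfold inv_pt; rewrite dot_scale_r.
  rewrite C in *; field; lra.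
Qed.

Lemma on_circle_dilation (p : pt) : on_circle a ra p ->
  p = pscale (dot (pscale 2 a) p + -1) (inv_pt p).
Proof.
  intro C; rewrite dot_scale_l.
  replace (2 * dot a p + -1) with (dot p p) by (apply on_circle_power in C; lra).
  apply pscale_dot_inv_pt, on_circle_neq_origin, C.
Qed.

Lemma inverse_quadrilateral_collinear (p1 p2 q1 q2 b d : pt) :
  on_circle a ra p1 -> on_circle a ra p2 -> on_circle a ra q1 -> on_circle a ra q2 ->
  inv_pt p1 <> inv_pt p2 -> inv_pt p1 <> inv_pt q1 -> inv_pt p2 <> inv_pt q1 ->
  on_line p1 p2 b -> on_line q1 q2 b ->
  on_line (inv_pt p1) (inv_pt p2) d -> on_line (inv_pt q1) (inv_pt q2) d ->
  collinear origin b d.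
Proof.
  intros C1 C2 C3 C4 H12 H13 H23 Hb1 Hb2 Hd1 Hd2.
  apply (dilation_collinear (pscale 2 a) (-1) p1 p2 q1 q2
           (inv_pt p1) (inv_pt p2) (inv_pt q1) (inv_pt q2)); try apply on_circle_dilation; auto.
  apply (lines_nonparallel _ _ _ _ d); auto.
  apply (concyclic_not_collinear a _ _ _ ra); auto; apply on_circle_inv_pt; auto.
Qed.

Lemma circ_pt_dot (t : R) :
  dot (circ_pt a ra t) (circ_pt a ra t)
  = 1 + 2 * ra * (ra + fst a * cos t + snd a * sin t).
Proof.
  pose proof (sin2_cos2 t) as Hsc; unfold Rsqr in Hsc.
  destruct a as [A B]; unfold circ_pt, padd, pscale, dot in *; simpl in *; nra.
Qed.

Lemma circ_pt_on_circle (t : R) : on_circle a ra (circ_pt a ra t).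
Proof.
  apply on_circle_power.
  rewrite circ_pt_dot; destruct a as [A B]; unfold circ_pt, padd, pscale, dot in *; simpl in *.
  nra.
Qed.

Lemma arc_interior_open_disk (lo hi t : R) :
  (forall s, lo <= s <= hi -> norm (circ_pt a ra s) <= 1) -> lo < t < hi ->
  norm (circ_pt a ra t) < 1.
Proof.
  intros Hle Ht.
  assert (Hphi : forall s, lo <= s <= hi -> ra + fst a * cos s + snd a * sin s <= 0).
  { intros s Hs; specialize (Hle s Hs).
    pose proof (circ_pt_dot s) as E; rewrite <- norm_sqr in E.
    pose proof (sqrt_pos (dot (circ_pt a ra s) (circ_pt a ra s))); unfold norm in *; nra. }
  assert (Hab : fst a ^ 2 + snd a ^ 2 = 1 + ra ^ 2) by (unfold dot in a_orth; nra).
  pose proof (trig_nonpos_interior_neg _ _ _ _ _ t ra_gt0 Hab Hphi Ht).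
  pose proof (circ_pt_dot t) as E; rewrite <- norm_sqr in E.
  pose proof (sqrt_pos (dot (circ_pt a ra t) (circ_pt a ra t))); unfold norm in *; nra.
Qed.

Lemma arc_order4_inner (xs x y ys : pt) : arc_order4_in_closed_disk a ra xs x y ys ->
  exists t2 t3, x = circ_pt a ra t2 /\ y = circ_pt a ra t3 /\ Rabs (t3 - t2) < 2 * PI /\
    forall t, Rmin t2 t3 <= t <= Rmax t2 t3 -> norm (circ_pt a ra t) < 1.
Proof.
  intros [t1 [t2 [t3 [t4 [Hord [Habs [_ [E2 [E3 [_ Hin]]]]]]]]]].
  exists t2, t3; repeat split; try assumption.
  - revert Habs; unfold Rabs.
    destruct (Rcase_abs (t3 - t2)), (Rcase_abs (t4 - t1)); lra.
  - intros t Ht; apply (arc_interior_open_disk (Rmin t1 t4) (Rmax t1 t4)); [exact Hin|].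
    revert Ht; unfold Rmin, Rmax; destruct (Rle_dec t2 t3), (Rle_dec t1 t4); lra.
Qed.

Lemma on_J_line_crossing (xs x y ys n : pt) : arc_order4_in_closed_disk a ra xs x y ys ->
  dot n x * dot n y <= 0 -> exists w, on_J a ra x y w /\ dot n w = 0.
Proof.
  intros Harc Hsign.
  destruct (arc_order4_inner xs x y ys Harc) as [t2 [t3 [Ex [Ey [Habs Hin]]]]].
  set (g := fun t => dot n (circ_pt a ra t)).
  assert (Hg : continuity g) by (unfold g, dot, circ_pt, padd, pscale; simpl; reg).
  destruct (IVT_cor g (Rmin t2 t3) (Rmax t2 t3) Hg) as [tw [Htw Hgw]].
  - unfold Rmin, Rmax; destruct (Rle_dec t2 t3); lra.
  - unfold Rmin, Rmax; destruct (Rle_dec t2 t3); unfold g; rewrite <- Ex, <- Ey; nra.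
  - exists (circ_pt a ra tw); split; [| exact Hgw].
    exists t2, tw, t3; repeat split; try assumption.
    revert Htw; unfold Rmin, Rmax; destruct (Rle_dec t2 t3); lra.
Qed.

(* On the circle, the hyperbolic bisector of [x] and [y] is cut out by a line through [0]. *)
Lemma dist2_bisector_normal (x y w : pt) : on_circle a ra w ->
  dist2 x w * (1 - dot y y) - dist2 y w * (1 - dot x x) = 2 * dot (bisector_normal x y a) w.
Proof.
  intro Cw; apply on_circle_power in Cw.
  destruct x, y, a, w; unfold bisector_normal, dist2, psub, pscale, dot in *; simpl in *.
  nra.
Qed.

Lemma bisector_normal_sign (x y : pt) : on_circle a ra x -> on_circle a ra y -> x <> y ->
  dot x x < 1 -> dot y y < 1 ->
  dot (bisector_normal x y a) x < 0 /\ 0 < dot (bisector_normal x y a) y.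
Proof.
  intros Cx Cy Hxy Hx Hy.
  pose proof (dist2_bisector_normal x y x Cx) as Ex.
  pose proof (dist2_bisector_normal x y y Cy) as Ey.
  rewrite dist2_diag in Ex, Ey.
  pose proof (dist2_gt0 y x (not_eq_sym Hxy)); pose proof (dist2_gt0 x y Hxy).
  split; nra.
Qed.

Lemma on_line_center_root (c : pt) (t : R) : dot a c = / 2 ->
  on_circle a ra (pscale t c) -> t * t * dot c c - t + 1 = 0.
Proof.
  intros Hac C; apply on_circle_power in C.
  rewrite dot_scale_l, !dot_scale_r, Hac in C; lra.
Qed.

Lemma on_line_center_in_disk_unique (c : pt) (s t : R) : dot a c = / 2 ->
  on_circle a ra (pscale s c) -> on_circle a ra (pscale t c) ->
  dot (pscale s c) (pscale s c) < 1 -> dot (pscale t c) (pscale t c) < 1 -> s = t.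
Proof.
  intros Hac Cs Ct Ns Nt.
  pose proof (on_line_center_root c s Hac Cs); pose proof (on_line_center_root c t Hac Ct).
  rewrite dot_scale_l, dot_scale_r in Ns, Nt; pose proof (dot_ge0 c).
  destruct (Req_dec s t) as [| Hst]; [assumption | exfalso].
  pose proof (quadratic_roots_product (dot c c) s t ltac:(assumption) ltac:(assumption) Hst) as P.
  assert (0 <= s * s * dot c c) by nra; assert (0 <= t * t * dot c c) by nra.
  assert ((s * s * dot c c) * (t * t * dot c c) = 1)
    by (transitivity ((s * t * dot c c) * (s * t * dot c c)); [ring | rewrite P; ring]).
  nra.
Qed.

Lemma on_line_center_inv_pt (c : pt) (t t' : R) : dot a c = / 2 -> c <> origin ->
  on_circle a ra (pscale t c) -> on_circle a ra (pscale t' c) ->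
  dot (pscale t c) (pscale t c) < 1 -> 1 <= dot (pscale t' c) (pscale t' c) ->
  pscale t' c = inv_pt (pscale t c).
Proof.
  intros Hac Hc Ct Ct' Nt Nt'.
  pose proof (on_line_center_root c t Hac Ct); pose proof (on_line_center_root c t' Hac Ct').
  rewrite dot_scale_l, dot_scale_r in Nt, Nt'; pose proof (dot_gt0 c Hc).
  assert (Htt : t <> t') by (intros ->; lra).
  pose proof (quadratic_roots_product (dot c c) t t' ltac:(assumption) ltac:(assumption) Htt).
  assert (t <> 0) by (intros ->; lra).
  rewrite inv_pt_scale by assumption; f_equal; field_simplify_eq; lra.
Qed.

Lemma orthogonal_circles_of_dot (c : pt) (rc : R) (x : pt) :
  on_circle a ra x -> on_circle c rc x -> dot a c = / 2 -> dot c x = dot x x / 2 ->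
  orthogonal_circles a ra c rc.
Proof.
  intros Cx Ccx Hac Hcx; exists x; split; [exact Cx | split; [exact Ccx|]].
  apply on_circle_power in Cx.
  transitivity (dot x x - dot a x - dot c x + dot a c);
    [unfold dot, psub; simpl; ring | rewrite Hcx, Hac; lra].
Qed.

Lemma center_line_on_J (xs ys x y c z : pt) : arc_order4_in_closed_disk a ra xs x y ys ->
  on_circle a ra x -> on_circle a ra y -> x <> y -> dot x x < 1 -> dot y y < 1 ->
  c <> origin -> dot a c = / 2 -> dot c x = dot x x / 2 -> dot c y = dot y y / 2 ->
  on_line origin c z -> on_circle a ra z -> dot z z < 1 -> on_J a ra x y z.
Proof.
  intros Harc Cx Cy Hxy Hx Hy Hc Hac Hcx Hcy Lz Cz Nz.
  set (n := bisector_normal x y a).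
  pose proof (bisector_normal_dot x y a c Hac Hcx Hcy) as Hnc; fold n in Hnc.
  destruct (bisector_normal_sign x y Cx Cy Hxy Hx Hy) as [Hnx Hny].
  fold n in Hnx, Hny.
  destruct (on_J_line_crossing xs x y ys n Harc ltac:(nra)) as [w [Jw Hnw]].
  assert (Hn : n <> origin)
    by (intros E; rewrite E in Hnx; unfold dot, origin in Hnx; simpl in Hnx; lra).
  destruct (common_normal_parallel n w c Hnw Hnc Hn Hc) as [s Hs].
  destruct (on_line_origin c z Lz) as [t Ht].
  assert (Cw : on_circle a ra w)
    by (destruct Jw as [t1 [t2 [t3 [_ [_ [_ [-> _]]]]]]]; apply circ_pt_on_circle).
  pose proof (on_J_in_disk a ra x y w Jw) as Nw.
  subst w z.
  replace t with s by (apply (on_line_center_in_disk_unique c); assumption).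
  exact Jw.
Qed.

Lemma center_line_equidistant (x y c z : pt) :
  dot a c = / 2 -> dot c x = dot x x / 2 -> dot c y = dot y y / 2 ->
  on_line origin c z -> on_circle a ra z ->
  dist2 x z * (1 - dot y y) = dist2 y z * (1 - dot x x).
Proof.
  intros Hac Hcx Hcy Lz Cz.
  pose proof (dist2_bisector_normal x y z Cz) as E.
  destruct (on_line_origin c z Lz) as [t ->].
  rewrite dot_scale_r, bisector_normal_dot in E by assumption; lra.
Qed.

Lemma center_line_midpoint (xs ys x y c z z' : pt) : arc_order4_in_closed_disk a ra xs x y ys ->
  on_circle a ra x -> on_circle a ra y -> x <> y -> dot x x < 1 -> dot y y < 1 ->
  c <> origin -> dot a c = / 2 -> dot c x = dot x x / 2 -> dot c y = dot y y / 2 ->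
  on_line origin c z -> on_circle a ra z -> dot z z < 1 ->
  on_line origin c z' -> on_circle a ra z' -> 1 <= dot z' z' ->
  hyp_midpoint_J a ra x y z /\ abs_ratio z x (inv_pt x) z' = abs_ratio z y (inv_pt y) z'.
Proof.
  intros Harc Cx Cy Hxy Hx Hy Hc Hac Hcx Hcy Lz Cz Nz Lz' Cz' Nz'.
  pose proof (center_line_equidistant x y c z Hac Hcx Hcy Lz Cz) as Eq.
  assert (Hxz : x <> z).
  { intros <-; rewrite dist2_diag in Eq; pose proof (dist2_gt0 y x (not_eq_sym Hxy)); nra. }
  assert (Hyz : y <> z).
  { intros <-; rewrite dist2_diag in Eq; pose proof (dist2_gt0 x y Hxy); nra. }
  split; [split|].
  - apply (center_line_on_J xs ys x y c z); assumption.
  - apply rho_eq_of_dist2; assumption.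
  - destruct (on_line_origin c z Lz) as [t Ht]; destruct (on_line_origin c z' Lz') as [t' Ht'].
    assert (Hz' : z' = inv_pt z).
    { subst z z'; apply on_line_center_inv_pt; assumption. }
    pose proof on_circle_neq_origin as Hne.
    rewrite Hz', !abs_ratio_inv_pt by auto.
    pose proof (dist2_gt0 x z Hxz); pose proof (dist2_gt0 y z Hyz).
    field_simplify_eq; [nra | lra].
Qed.

Lemma semicircle_case (xs ys x y c z z' : pt) (rc : R) :
  arc_order4_in_closed_disk a ra xs x y ys ->
  on_circle a ra x -> on_circle a ra y -> x <> y -> dot x x < 1 -> dot y y < 1 ->
  a = pscale (/ 2) (padd (inv_pt x) (inv_pt y)) ->
  0 < rc -> on_circle c rc origin -> on_circle c rc x -> on_circle c rc y ->
  on_line origin c z -> on_circle a ra z -> dot z z < 1 ->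
  on_line origin c z' -> on_circle a ra z' -> 1 <= dot z' z' ->
  hyp_midpoint_J a ra x y z /\ orthogonal_circles a ra c rc /\
  abs_ratio z x (inv_pt x) z' = abs_ratio z y (inv_pt y) z'.
Proof.
  intros Harc Cx Cy Hxy Hx Hy Ha Hrc C0 Ccx Ccy Lz Cz Nz Lz' Cz' Nz'.
  assert (Hcx := circle_through_origin_dot c x rc ltac:(lra) C0 Ccx).
  assert (Hcy := circle_through_origin_dot c y rc ltac:(lra) C0 Ccy).
  assert (Hac := semicircle_center_dot x y a c (on_circle_neq_origin x Cx)
                   (on_circle_neq_origin y Cy) Ha Hcx Hcy).
  assert (Hc : c <> origin).
  { intros ->; apply on_circle_dist2 in C0; [| lra].
    unfold dot, origin in C0; simpl in C0; nra. }
  destruct (center_line_midpoint xs ys x y c z z') as [Hmid Hratio]; try assumption.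
  split; [exact Hmid | split; [| exact Hratio]].
  apply (orthogonal_circles_of_dot c rc x); assumption.
Qed.

Lemma inverse_quadrilaterals_collinear (x y xs ys b d b' d' : pt) :
  on_circle a ra x -> on_circle a ra y -> on_circle a ra xs -> on_circle a ra ys ->
  dot x x < 1 -> dot y y < 1 -> dot x x <> dot y y -> dot xs xs = 1 -> dot ys ys = 1 ->
  on_line xs y b -> on_line x (inv_pt y) b ->
  on_line (inv_pt x) y d -> on_line xs (inv_pt y) d ->
  on_line x ys b' -> on_line (inv_pt x) y b' ->
  on_line x (inv_pt y) d' -> on_line (inv_pt x) ys d' ->
  collinear origin b d /\ collinear origin b' d'.
Proof.
  intros Cx Cy Cxs Cys Nx Ny Nxy Nxs Nys Hb1 Hb2 Hd1 Hd2 Hb1' Hb2' Hd1' Hd2'.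
  pose proof (on_circle_neq_origin x Cx) as Hx0; pose proof (on_circle_neq_origin y Cy) as Hy0.
  pose proof (inv_pt_dot x Hx0); pose proof (inv_pt_dot y Hy0).
  pose proof (dot_gt0 x Hx0); pose proof (dot_gt0 y Hy0).
  assert (/ dot x x <> / dot y y)
    by (intros E; apply Nxy; rewrite <- (Rinv_inv (dot x x)), E, Rinv_inv; reflexivity).
  assert (1 < / dot x x) by (rewrite <- Rinv_1; apply Rinv_lt_contravar; lra).
  assert (1 < / dot y y) by (rewrite <- Rinv_1; apply Rinv_lt_contravar; lra).
  split.
  - rewrite <- (inv_pt_unit xs Nxs) in Hd2; rewrite <- (inv_pt_involutive y Hy0) in Hd1.
    apply (inverse_quadrilateral_collinear xs y x (inv_pt y)); auto using on_circle_inv_pt.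
    all: apply neq_of_dot;
      rewrite ?(inv_pt_unit xs Nxs), ?(inv_pt_dot x Hx0), ?(inv_pt_dot y Hy0); lra.
  - rewrite <- (inv_pt_unit ys Nys) in Hd2'; rewrite <- (inv_pt_involutive x Hx0) in Hd1'.
    apply (inverse_quadrilateral_collinear x ys (inv_pt x) y); auto using on_circle_inv_pt.
    all: apply neq_of_dot; rewrite ?(inv_pt_unit ys Nys), ?(inv_pt_involutive x Hx0),
      ?(inv_pt_dot x Hx0), ?(inv_pt_dot y Hy0); lra.
Qed.

End OrthogonalCircle.

Theorem proposition4p29
  (x y a : pt) (ra : R) (xs ys : pt) (c : pt) (rc : R) (z z' b d b' d' : pt) :
  norm x < 1 -> norm y < 1 -> x <> origin -> y <> origin ->
  ~ collinear origin x y -> norm x <> norm y ->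
  0 < ra ->
  on_circle a ra x -> on_circle a ra y ->
  on_circle a ra (inv_pt x) -> on_circle a ra (inv_pt y) ->
  norm xs = 1 -> norm ys = 1 -> on_circle a ra xs -> on_circle a ra ys ->
  arc_order4_in_closed_disk a ra xs x y ys ->
  0 < rc ->
  on_circle c rc origin -> on_circle c rc x -> on_circle c rc y ->
  on_line origin c z -> on_circle a ra z -> norm z < 1 ->
  on_line origin c z' -> on_circle a ra z' -> 1 <= norm z' ->
  on_line xs y b -> on_line x (inv_pt y) b ->
  on_line (inv_pt x) y d -> on_line xs (inv_pt y) d ->
  on_line x ys b' -> on_line (inv_pt x) y b' ->
  on_line x (inv_pt y) d' -> on_line (inv_pt x) ys d' ->
  (semicircle_endpoints a ra (inv_pt x) (inv_pt y) ->
     hyp_midpoint_J a ra x y z /\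
     orthogonal_circles a ra c rc /\
     abs_ratio z x (inv_pt x) z' = abs_ratio z y (inv_pt y) z')
  /\
  (collinear origin b d /\ collinear origin b' d').
Proof.
  intros Nx Ny Hx0 _ _ Hnxy Hra Cx Cy Cxi _ Nxs Nys Cxs Cys Harc Hrc C0 Ccx Ccy
    Lz Cz Nz Lz' Cz' Nz' Hb1 Hb2 Hd1 Hd2 Hb1' Hb2' Hd1' Hd2'.
  apply norm_lt1 in Nx, Ny, Nz; apply norm_eq1 in Nxs, Nys; apply norm_ge1 in Nz'.
  assert (Ha : dot a a = 1 + ra * ra)
    by (apply (circle_orthogonal_unit a ra Hra x); auto; lra).
  assert (Hxy : dot x x <> dot y y) by (intro E; apply Hnxy; unfold norm; rewrite E; reflexivity).
  split.
  - intros [_ [_ Hcenter]].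
    apply (semicircle_case a ra Hra Ha xs ys); auto.
    intros ->; contradiction.
  - apply (inverse_quadrilaterals_collinear a ra Hra Ha x y xs ys); assumption.
Qed.
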